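(* Let $1\le k\le d$ and let $\alpha^1,\dots,\alpha^k\in\mathbb{R}^d$ be such that $\alpha^1,\dots,\alpha^k,e_{k+1},\dots,e_d$ are linearly independent. Let $\alpha^{k+1}\in\mathbb{R}^d$ be such that $\sum_{i=1}^{k+1}\theta_i\alpha^i=0$ for some $\theta_i>0$ with $\sum_{i=1}^{k+1}\theta_i=1$. Let $M_1,\dots,M_{k+1}>0$ and let $a_i<b_i$ be integers for $k+1\le i\le d$. Then $$\sum_{j_1\in\mathbb{Z}}\cdots\sum_{j_k\in\mathbb{Z}}\sum_{j_{k+1}=a_{k+1}}^{b_{k+1}}\cdots\sum_{j_d=a_d}^{b_d}\min_{1\le n\le k+1}\{M_n2^{\alpha^n\cdot\vec j}\}\le C\prod_{i=k+1}^d(b_i-a_i)\prod_{i=1}^{k+1}M_i^{\theta_i},$$ where $\vec j=(j_1,\dots,j_d)$ and $C$ is independent of all $a_n$, $b_n$, $M_n$.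
   Context: $e_1,\dots,e_d$ is the standard basis of $\mathbb{R}^d$ and $\cdot$ the standard inner product. *)

From HB Require Import structures.
From mathcomp Require Import all_boot all_order all_algebra.
From mathcomp Require Import all_classical all_reals all_analysis.
Set Implicit Arguments. Unset Strict Implicit. Unset Printing Implicit Defensive.
Import Order.TTheory GRing.Theory Num.Theory.
Local Open Scope ring_scope.

Definition dotZ (R : realType) (d : nat) (x : 'rV[R]_d) (j : 'rV[int]_d) : R :=
  \sum_(i < d) x 0 i * (j 0 i)%:~R.

(* The d x d matrix whose rows are alpha^1,...,alpha^k, e_{k+1},...,e_d
   (0-indexed: row i is alpha (inord i) if i < k, else the i-th basis vector). *)
Definition alpha_e_mx (R : realType) (d k : nat) (alpha : 'I_k.+1 -> 'rV[R]_d)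
  : 'M[R]_d :=
  \matrix_(i < d) (if (i < k)%N then alpha (inord i) else delta_mx 0 i).

(* index set: j_1..j_k in Z, a_i <= j_i <= b_i for i = k+1..d (0-indexed i >= k) *)
Definition box (d k : nat) (a b : 'I_d -> int) : set 'rV[int]_d :=
  [set j | forall i : 'I_d, (k <= i)%N -> a i <= j 0 i <= b i].

Definition minterm (R : realType) (d k : nat) (alpha : 'I_k.+1 -> 'rV[R]_d)
  (M : 'I_k.+1 -> R) (j : 'rV[int]_d) : \bar R :=
  \big[Order.min/+oo%E]_(n < k.+1) ((M n * (2 `^ (dotZ (alpha n) j)))%:E).

From HB Require Import structures.
From mathcomp Require Import all_boot all_order all_algebra.
From mathcomp Require Import all_classical all_reals all_analysis.
From mathcomp Require Import ring lra zify.
Import Order.TTheory GRing.Theory Num.Theory.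
Local Open Scope ring_scope.
Set Implicit Arguments. Unset Strict Implicit. Unset Printing Implicit Defensive.

(* Put L = sum_n theta_n ln M_n, so that prod_n M_n^theta_n = e^L and
   M_n 2^(alpha^n . j) = e^L e^(u_n(j)) with u_n(j) = ln M_n + (alpha^n . j) ln 2 - L.
   As sum_n theta_n u_n(j) = 0, the smallest value m = u_n0(j) controls all the
   others: theta_n |u_n(j)| <= -m.  The matrix with rows alpha^1, ..., alpha^k,
   e_(k+1), ..., e_d being invertible, j lies within O(-m) of the real point w(j)
   that shares its last d - k coordinates and annihilates u_1, ..., u_k.  Hence the
   summand is at most e^L prod_(i <= k) e^(-delta |j_i - w_i(j)|), where w(j) only
   depends on j_(k+1), ..., j_d.  Summing over j_1, ..., j_k gives a product of
   two-sided geometric series bounded independently of w, and the remaining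
   coordinates contribute prod_i (b_i - a_i + 1) <= 2^(d-k) prod_i (b_i - a_i). *)

Lemma weight_norm_le_oppr_min (R : realDomainType) (I : finType) (th u : I -> R)
    (n0 : I) :
  (forall i, 0 <= th i) -> \sum_i th i = 1 -> \sum_i th i * u i = 0 ->
  (forall i, u n0 <= u i) -> forall p, th p * `|u p| <= - u n0.
Proof.
move=> th_ge0 th_sum1 thu_sum0 u_min p.
have m_le0 : u n0 <= 0.
  have : \sum_i th i * u n0 <= \sum_i th i * u i.
    by apply: ler_sum => i _; rewrite ler_wpM2l.
  by rewrite thu_sum0 -mulr_suml th_sum1 mul1r.
have th_rest : \sum_(i | i != p) th i = 1 - th p.
  by rewrite -th_sum1 [in RHS](bigD1 p) //= addrAC subrr add0r.
have th_rest_ge0 : 0 <= 1 - th p by rewrite -th_rest sumr_ge0.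
have rest_ge : (1 - th p) * u n0 <= \sum_(i | i != p) th i * u i.
  by rewrite -th_rest mulr_suml; apply: ler_sum => i _; rewrite ler_wpM2l.
have thu_p : th p * u p = - \sum_(i | i != p) th i * u i.
  by move: thu_sum0; rewrite (bigD1 p) //= => /eqP; rewrite addr_eq0 => /eqP.
have := ler_wpM2l (th_ge0 p) (u_min p).
have : th p * u n0 <= 0 by rewrite mulr_ge0_le0.
have : 0 <= (1 - th p) * - u n0 by rewrite mulr_ge0 // oppr_ge0.
by case: (lerP 0 (u p)) => u_p; [rewrite ger0_norm | rewrite ltr0_norm]; lra.
Qed.

Lemma sum_norm_mulmx_le (R : numDomainType) (m n : nat) (A : 'M[R]_(m, n))
    (v : 'cV[R]_n) (z : R) :
  (forall p, `|v p 0| <= z) ->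
  \sum_i `|(A *m v) i 0| <= (\sum_i \sum_p `|A i p|) * z.
Proof.
move=> v_le; rewrite mulr_suml; apply: ler_sum => i _; rewrite mulr_suml mxE.
apply: le_trans (ler_norm_sum _ _ _) _; apply: ler_sum => p _.
by rewrite normrM ler_wpM2l.
Qed.

(* With [q = expR (- δ)], the partial sums satisfy [(1 - q) S_n <= E_n] while
   [n <= c] and [(1 - q) S_n <= 3 - E_n] afterwards, [E_n] being the n-th term. *)
Lemma sum_expR_dist_le (R : realType) (δ c : R) (n : nat) : 0 < δ ->
  \sum_(m < n) expR (- (δ * `|m%:R - c|)) <= 3 / (1 - expR (- δ)).
Proof.
move=> δ_gt0; set q := expR (- δ); pose E (m : nat) := expR (- (δ * `|m%:R - c|)).
have q_gt0 : 0 < q := expR_gt0 _.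
have q_lt1 : q < 1 by rewrite expR_lt1 oppr_lt0.
have E_gt0 m : 0 < E m := expR_gt0 _.
have E_le1 m : E m <= 1 by rewrite /E expR_le1 oppr_le0 mulr_ge0 // ltW.
have E_left m : m.+1%:R <= c -> E m = q * E m.+1.
  move=> h; rewrite /E /q -expRD !ler0_norm -?natr1; [congr expR; ring|lra|lra].
have E_right m : c <= m%:R -> E m.+1 = q * E m.
  move=> h; rewrite /E /q -expRD !ger0_norm -?natr1; [congr expR; ring|lra|lra].
pose H m := if m%:R <= c then E m else 3 - E m.
suff inv m : (1 - q) * \sum_(i < m) E i <= H m.
  rewrite ler_pdivlMr ?subr_gt0 // mulrC; apply: le_trans (inv n) _.
  by rewrite /H; case: ifP => _; have := E_gt0 n; have := E_le1 n; lra.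
elim: m => [|m IH].
  by rewrite big_ord0 mulr0 /H; case: ifP => _; have := E_gt0 0; have := E_le1 0; lra.
rewrite big_ord_recr /= mulrDr; move: IH; rewrite /H.
have := E_gt0 m; have := E_le1 m; have := E_gt0 m.+1; have := E_le1 m.+1.
have qE_ge0 : 0 <= q * E m by rewrite mulr_ge0 ?ltW.
case: (lerP m.+1%:R c) => [h1|h1].
  have h0 : m%:R <= c by apply: le_trans h1; rewrite ler_nat.
  have := mulr_ge0 (sqr_ge0 (1 - q)) (ltW (E_gt0 m.+1)).
  by rewrite h0 (E_left _ h1); lra.
case: (lerP m%:R c) => h0; first lra.
by rewrite (E_right _ (ltW h0)); lra.
Qed.

Lemma ler_sum_seq_inj (R : numDomainType) (T : eqType) (P : finType) (s : seq T)
    (h : T -> R) (F : P -> R) (enc : T -> P) :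
  uniq s -> {in s &, injective enc} -> (forall x, x \in s -> h x <= F (enc x)) ->
  (forall p, 0 <= F p) -> \sum_(x <- s) h x <= \sum_p F p.
Proof.
move=> s_uniq enc_inj h_le F_ge0.
apply: (@le_trans _ _ (\sum_(x <- s) F (enc x))).
  by rewrite big_seq [leRHS]big_seq; apply: ler_sum.
rewrite -(big_map enc xpredT F) big_uniq; last by rewrite map_inj_in_uniq.
by rewrite [leRHS](bigID (mem (map enc s))) /= lerDl sumr_ge0.
Qed.

Lemma sum_eq_indicator (R : pzSemiRingType) (J : finType) (j0 : J) :
  \sum_(m : J) (m == j0)%:R = 1 :> R.
Proof. by rewrite (bigD1 j0) //= eqxx big1 ?addr0 // => m /negbTE ->. Qed.

(* Summing over pairs [(t, h)] of functions: [t] carries the coordinates in [Q]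
   and [h] the others, the unused coordinates of each being pinned to [j0]. *)
Lemma sum_split_ffun_le (R : numDomainType) (I J : finType) (j0 : J) (Q : pred I)
    (w : I -> J -> R) (g : {ffun I -> J} -> I -> J -> R) (C : I -> R) (B : R) :
  (forall i m, 0 <= w i m) -> (forall t i m, 0 <= g t i m) -> 0 <= B ->
  (forall i, Q i -> \sum_m w i m <= C i) ->
  (forall t i, ~~ Q i -> \sum_m g t i m <= B) ->
  \sum_(t : {ffun I -> J}) \sum_(h : {ffun I -> J})
    \prod_i (if Q i then w i (t i) * (h i == j0)%:R
             else (t i == j0)%:R * g t i (h i))
  <= \prod_i (if Q i then C i else B).
Proof.
move=> w_ge0 g_ge0 B_ge0 w_le g_le.
pose H i m := if Q i then w i m else B * (m == j0)%:R.
apply: (@le_trans _ _ (\sum_(t : {ffun I -> J}) \prod_i H i (t i))).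
  apply: ler_sum => t _; rewrite -(bigA_distr_bigA (fun i m =>
    if Q i then w i (t i) * (m == j0)%:R else (t i == j0)%:R * g t i m)) /=.
  apply: ler_prod => i _; rewrite sumr_ge0 => [|m _]; last first.
    by case: ifP => _; rewrite mulr_ge0.
  rewrite /H /=; case: ifP => Qi.
    by rewrite -mulr_sumr sum_eq_indicator mulr1.
  by rewrite -mulr_sumr mulrC ler_wpM2r // g_le ?Qi.
rewrite -(bigA_distr_bigA H) /=; apply: ler_prod => i _.
rewrite sumr_ge0 /= => [|m _]; last by rewrite /H; case: ifP => _; rewrite ?mulr_ge0.
rewrite /H; case: ifP => Qi; first exact: w_le.
by rewrite -mulr_sumr sum_eq_indicator mulr1.
Qed.

Lemma sum_ord_leq (n c : nat) : (\sum_(m < n) (m <= c) = minn n c.+1)%N.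
Proof.
elim: n => [|n IH]; first by rewrite big_ord0.
by rewrite big_ord_recr /= IH; case: leqP => h /=; lia.
Qed.

Lemma prod_if_le (R : realDomainType) (I : finType) (P : pred I) (B : R)
    (c : I -> int) :
  1 <= B -> (forall i, P i -> 0 < c i) ->
  \prod_i (if P i then (absz (c i)).+1%:R else B)
  <= (2 * B) ^+ #|I| * \prod_(i | P i) (c i)%:~R.
Proof.
move=> B_ge1 c_gt0.
apply: (@le_trans _ _ (\prod_i (2 * B * (if P i then (c i)%:~R else 1)))).
  apply: ler_prod => i _; case: ifP => Pi /=; last first.
    by rewrite mulr1 (le_trans ler01) //=; lra.
  have c_ge1 : 1 <= (c i)%:~R :> R by rewrite ler1z; have := c_gt0 i Pi; lia.
  by rewrite ler0n /= -natr1 natr_absz gtr0_norm ?c_gt0 //; nra.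
by rewrite big_split /= -big_mkcond prodr_const.
Qed.

Lemma esum_le_of_seq (R : realType) (T : choiceType) (S : set T) (f : T -> R)
    (c : R) :
  (forall s : seq T, uniq s -> (forall x, x \in s -> S x) -> \sum_(x <- s) f x <= c) ->
  (\esum_(x in S) (f x)%:E <= c%:E)%E.
Proof.
move=> sum_le; apply: ge_ereal_sup => _ [X [finX XS] <-].
rewrite fsbig_finite //= sumEFin lee_fin; apply: sum_le; first exact: finmap.fset_uniq.
by move=> x; rewrite in_fset_set // inE => /XS.
Qed.

Section BoxCode.
Variables (d k N : nat) (a b : 'I_d -> int) (s : seq 'rV[int]_d).
Hypotheses (s_box : forall x : 'rV[int]_d, x \in s -> box k a b x)
  (s_le_N : forall (x : 'rV[int]_d) i, x \in s -> (absz (x 0%R i) <= N)%N)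
  (ba_le_N : forall i, (absz (b i - a i)%R <= N)%N).

Local Notation n := (2 * N).+1.

Definition box_code (x : 'rV[int]_d) : {ffun 'I_d -> 'I_n} * {ffun 'I_d -> 'I_n} :=
  ([ffun i : 'I_d => if (k <= i)%N then inord (absz (x 0 i - a i)%R) else ord0],
   [ffun i : 'I_d => if (k <= i)%N then ord0 else inord (absz (x 0 i + N%:Z))]).

Definition tail_row (t : {ffun 'I_d -> 'I_n}) : 'rV[int]_d :=
  \row_i (a i + (t i : nat)%:Z).

Lemma box_code_tailE (x : 'rV[int]_d) (i : 'I_d) : x \in s -> (k <= i)%N ->
  ((box_code x).1 i : nat) = absz (x 0 i - a i)%R.
Proof.
move=> xs ki; rewrite ffunE ki inordK //; have := ba_le_N i.
by have /andP[] := s_box xs ki; lia.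
Qed.

Lemma box_code_headE (x : 'rV[int]_d) (i : 'I_d) : x \in s -> (i < k)%N ->
  ((box_code x).2 i : nat) = absz (x 0 i + N%:Z).
Proof.
by move=> xs ik; rewrite ffunE leqNgt ik inordK //; have := s_le_N i xs; lia.
Qed.

Lemma box_code_inj : {in s &, injective box_code}.
Proof.
move=> x y xs ys [/ffunP/(_ _)/(congr1 (@nat_of_ord _)) tx].
move=> /ffunP/(_ _)/(congr1 (@nat_of_ord _)) hy; apply/rowP => i.
case: (leqP k i) => ki.
  move: (tx i); rewrite !box_code_tailE //.
  by have /andP[] := s_box xs ki; have /andP[] := s_box ys ki; lia.
move: (hy i); rewrite !box_code_headE //.
by have := s_le_N i xs; have := s_le_N i ys; lia.
Qed.

Lemma tail_row_code (x : 'rV[int]_d) (i : 'I_d) : x \in s -> (k <= i)%N ->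
  tail_row (box_code x).1 0 i = x 0 i.
Proof.
move=> xs ki; rewrite mxE box_code_tailE //.
by have /andP[] := s_box xs ki; lia.
Qed.

End BoxCode.

Lemma sum_box_decay_le (R : realType) (d k : nat) (a b : 'I_d -> int) (δ : R)
    (cen : 'rV[int]_d -> 'I_d -> R) (s : seq 'rV[int]_d) :
  0 < δ ->
  (forall x y : 'rV[int]_d, (forall i : 'I_d, (k <= i)%N -> x 0 i = y 0 i) ->
    cen x = cen y) ->
  uniq s -> (forall x : 'rV[int]_d, x \in s -> box k a b x) ->
  \sum_(x <- s) \prod_(i < d | (i < k)%N) expR (- (δ * `|(x 0 i)%:~R - cen x i|))
  <= \prod_(i < d) (if (k <= i)%N then (absz (b i - a i)).+1%:R
                    else 3 / (1 - expR (- δ))).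
Proof.
move=> δ_gt0 cen_tail s_uniq s_box.
pose N := (\sum_(x <- s) \sum_i absz (x 0%R i) + \sum_i absz (b i - a i)%R)%N.
have s_le_N (x : 'rV[int]_d) i : x \in s -> (absz (x 0%R i) <= N)%N.
  move=> xs; rewrite /N; apply: leq_trans (leq_addr _ _).
  rewrite (big_rem x xs) /=; apply: leq_trans (leq_addr _ _).
  by rewrite (bigD1 i) //= leq_addr.
have ba_le_N i : (absz (b i - a i)%R <= N)%N.
  by rewrite /N; apply: leq_trans (leq_addl _ _); rewrite (bigD1 i) //= leq_addr.
pose w (i : 'I_d) (m : 'I_(2 * N).+1) : R := (m <= absz (b i - a i)%R)%N%:R.
pose g (t : {ffun 'I_d -> 'I_(2 * N).+1}) i (m : 'I_(2 * N).+1) :=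
  expR (- (δ * `|(m : nat)%:R - (N%:R + cen (tail_row a t) i)|)).
pose F (p : {ffun 'I_d -> 'I_(2 * N).+1} * {ffun 'I_d -> 'I_(2 * N).+1}) : R :=
  \prod_(i : 'I_d) (if (k <= i)%N then w i (p.1 i) * (p.2 i == ord0)%:R
                    else (p.1 i == ord0)%:R * g p.1 i (p.2 i)).
have F_ge0 p : 0 <= F p.
  by apply: prodr_ge0 => i _; case: ifP => _; rewrite mulr_ge0 ?expR_ge0.
have code_le (x : 'rV[int]_d) : x \in s ->
    \prod_(i < d | (i < k)%N) expR (- (δ * `|(x 0 i)%:~R - cen x i|))
    <= F (box_code k N a x).
  move=> xs; rewrite big_mkcond; apply: ler_prod => i _.
  case: (leqP k i) => ki.
    rewrite ler01 /w (box_code_tailE s_box ba_le_N) // ffunE ki eqxx mulr1.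
    rewrite (_ : (_ <= _)%N = true) ?lexx //.
    by have /andP[] := s_box x xs i ki; lia.
  have -> : (box_code k N a x).1 i = ord0 by rewrite ffunE leqNgt ki.
  rewrite expR_ge0 eqxx mul1r /g (cen_tail _ x) => [|j kj]; last first.
    exact: (tail_row_code s_box ba_le_N).
  rewrite (box_code_headE a s_le_N) // natr_absz (@ger0_norm _ (x 0 i + N%:Z)).
    by rewrite /= intrD addrKA.
  by have := s_le_N x i xs; lia.
have code_inj := box_code_inj s_box s_le_N ba_le_N.
apply: le_trans (ler_sum_seq_inj s_uniq code_inj code_le F_ge0) _.
rewrite -(pair_bigA _ (fun t h => F (t, h))) /=.
apply: sum_split_ffun_le => [i m|t i m||i _|t i _].
- by rewrite /w ler0n.
- exact: expR_ge0.
- by rewrite divr_ge0 // subr_ge0 expR_le1 oppr_le0 ltW.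
- by rewrite /w -natr_sum sum_ord_leq ler_nat geq_minr.
- exact: sum_expR_dist_le.
Qed.

Lemma dotZ_suml (R : realType) (d : nat) (I : finType) (c : I -> R)
    (x : I -> 'rV[R]_d) (j : 'rV[int]_d) :
  \sum_n c n * dotZ (x n) j = dotZ (\sum_n c n *: x n) j.
Proof.
rewrite /dotZ; under eq_bigr do rewrite mulr_sumr; rewrite exchange_big /=.
apply: eq_bigr => i _; rewrite summxE mulr_suml; apply: eq_bigr => n _.
by rewrite mxE mulrA.
Qed.

Lemma dotZ0 (R : realType) (d : nat) (j : 'rV[int]_d) : dotZ (0 : 'rV[R]_d) j = 0.
Proof. by rewrite /dotZ big1 // => i _; rewrite mxE mul0r. Qed.

Lemma ln2_gt0 (R : realType) : 0 < ln (2 : R).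
Proof. by rewrite ln_gt0 // ltr1n. Qed.

Section MinTerm.
Variables (R : realType) (d k : nat).
Variables (alpha : 'I_k.+1 -> 'rV[R]_d) (theta : 'I_k.+1 -> R).
Hypotheses (alpha_unit : alpha_e_mx alpha \in unitmx)
  (theta_gt0 : forall n, 0 < theta n) (theta_sum1 : \sum_n theta n = 1)
  (theta_alpha : \sum_n theta n *: alpha n = 0).
Variable M : 'I_k.+1 -> R.
Hypothesis M_gt0 : forall n, 0 < M n.

Definition log_wmean : R := \sum_n theta n * ln (M n).

Definition expo (j : 'rV[int]_d) (n : 'I_k.+1) : R :=
  ln (M n) + dotZ (alpha n) j * ln 2 - log_wmean.

(* The real point with the same last [d - k] coordinates as [j] at which
   [expo _ n] vanishes for [n < k], hence also for [n = k] since the weighted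
   sum of the [expo _ n] is zero. *)
Definition center (j : 'rV[int]_d) : 'cV[R]_d :=
  invmx (alpha_e_mx alpha) *m \col_p
    (if (p < k)%N then (log_wmean - ln (M (inord p))) / ln 2 else (j 0 p)%:~R).

Definition decay : R :=
  ln 2 / ((1 + \sum_i \sum_p `|invmx (alpha_e_mx alpha) i p|) * \sum_n (theta n)^-1).

Lemma prod_powR_theta : \prod_n M n `^ theta n = expR log_wmean.
Proof. by rewrite expR_sum; apply: eq_bigr => n _; rewrite /powR gt_eqF. Qed.

Lemma mul_powR2_expo (j : 'rV[int]_d) n :
  M n * 2 `^ dotZ (alpha n) j = expR log_wmean * expR (expo j n).
Proof.
by rewrite -expRD addrC subrK expRD lnK ?posrE // /powR gt_eqF.
Qed.

Lemma sum_theta_expo (j : 'rV[int]_d) : \sum_n theta n * expo j n = 0.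
Proof.
rewrite /expo; under eq_bigr do rewrite mulrBr mulrDr mulrA.
rewrite sumrB big_split /= -mulr_suml dotZ_suml theta_alpha dotZ0 mul0r addr0.
by rewrite -mulr_suml theta_sum1 mul1r subrr.
Qed.

Lemma mulmx_deviation (j : 'rV[int]_d) :
  alpha_e_mx alpha *m (\col_i (j 0 i)%:~R - center j) =
  \col_p (if (p < k)%N then expo j (inord p) / ln 2 else 0).
Proof.
rewrite mulmxBr mulKVmx //; apply/matrixP => p q; rewrite (ord1 q) !mxE.
under eq_bigr do rewrite !mxE; case: ifP => pk.
  by rewrite /expo /dotZ; field; rewrite lt0r_neq0 ?ln2_gt0.
rewrite (bigD1 p) //= big1 ?addr0 => [|i ip]; last first.
  by rewrite mxE (negbTE ip) andbF mul0r.
by rewrite mxE !eqxx mul1r subrr.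
Qed.

Lemma center_tail (x y : 'rV[int]_d) :
  (forall i : 'I_d, (k <= i)%N -> x 0 i = y 0 i) -> center x = center y.
Proof.
move=> xy; congr (_ *m _); apply/matrixP => p q; rewrite !mxE.
by case: ltnP => // kp; rewrite xy.
Qed.

Lemma decay_gt0 : 0 < decay.
Proof.
rewrite divr_gt0 ?ln2_gt0 // mulr_gt0 //.
  by apply: lt_le_trans ltr01 _; rewrite lerDl; apply: sumr_ge0 => i _; apply: sumr_ge0.
rewrite (bigD1 ord0) //=; apply: lt_le_trans (_ : 0 < (theta ord0)^-1) _.
  by rewrite invr_gt0.
by rewrite lerDl sumr_ge0 // => n _; rewrite invr_ge0 ltW.
Qed.

Lemma expo_min_le (j : 'rV[int]_d) n0 : (forall n, expo j n0 <= expo j n) ->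
  decay * \sum_i `|(j 0 i)%:~R - center j i 0| <= - expo j n0.
Proof.
move=> n0_min.
have w_le := weight_norm_le_oppr_min (fun n => ltW (theta_gt0 n)) theta_sum1
  (sum_theta_expo j) n0_min.
set K := \sum_i \sum_p `|invmx (alpha_e_mx alpha) i p|.
set S := \sum_n (theta n)^-1.
have S_ge n : (theta n)^-1 <= S.
  by rewrite /S (bigD1 n) //= lerDl sumr_ge0 // => i _; rewrite invr_ge0 ltW.
have S_gt0 : 0 < S by apply: lt_le_trans (S_ge ord0); rewrite invr_gt0.
have m_ge0 : 0 <= - expo j n0 by apply: le_trans (w_le n0); rewrite mulr_ge0 // ltW.
have l2_gt0 := ln2_gt0 R.
set z := S * - expo j n0 / ln 2.
have z_ge0 : 0 <= z by rewrite /z !(divr_ge0, mulr_ge0) // ltW.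
have v_le p : `|(\col_p (if (p < k)%N then expo j (inord p) / ln 2 else 0)
    : 'cV[R]_d) p 0| <= z.
  rewrite mxE; case: ifP => _; last by rewrite normr0.
  rewrite normrM normfV (gtr0_norm l2_gt0) /z ler_pM2r ?invr_gt0 //.
  apply: (@le_trans _ _ ((theta (inord p))^-1 * - expo j n0)); last first.
    by rewrite ler_wpM2r.
  rewrite -[`|_|](mulKf (lt0r_neq0 (theta_gt0 (inord p)))).
  by apply: ler_wpM2l; [rewrite invr_ge0 ltW | exact: w_le].
have := sum_norm_mulmx_le (invmx (alpha_e_mx alpha)) v_le.
rewrite -mulmx_deviation mulKmx //; under eq_bigr do rewrite 3!mxE; move=> dev_le.
have K_le : K * z <= (1 + K) * z by rewrite ler_wpM2r // lerDr.
apply: le_trans (ler_wpM2l (ltW decay_gt0) (le_trans dev_le K_le)) _.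
have K1_gt0 : 0 < 1 + K.
  by apply: lt_le_trans ltr01 _; rewrite lerDl sumr_ge0 // => i _; rewrite sumr_ge0.
suff -> : decay * ((1 + K) * z) = - expo j n0 by rewrite lexx.
by rewrite /decay -/K -/S /z; field; rewrite !gt_eqF.
Qed.

Lemma minterm_le (j : 'rV[int]_d) :
  (minterm alpha M j <= (expR log_wmean *
     \prod_(i < d | (i < k)%N) expR (- (decay * `|(j 0 i)%:~R - center j i 0|)))%:E)%E.
Proof.
have [n0 _ n0_min] := @arg_minP _ _ _ ord0 xpredT (expo j) isT.
apply: le_trans (bigmin_le _ n0 _) _.
rewrite mul_powR2_expo lee_fin ler_wpM2l ?expR_ge0 // -expR_sum ler_expR sumrN lerNr.
apply: le_trans (expo_min_le (fun n => n0_min n isT)).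
rewrite -mulr_sumr ler_wpM2l ?(ltW decay_gt0) //.
by rewrite [leRHS](bigID (fun i : 'I_d => (i < k)%N)) /= lerDl sumr_ge0.
Qed.

End MinTerm.

Theorem lemma5p3 (R : realType) (d k : nat) (alpha : 'I_k.+1 -> 'rV[R]_d)
  (theta : 'I_k.+1 -> R) :
  (1 <= k)%N -> (k <= d)%N ->
  row_free (alpha_e_mx alpha) ->
  (forall i, 0 < theta i) -> \sum_(i < k.+1) theta i = 1 ->
  \sum_(i < k.+1) theta i *: alpha i = 0 ->
  exists C : R, forall (M : 'I_k.+1 -> R) (a b : 'I_d -> int),
    (forall n, 0 < M n) ->
    (forall i : 'I_d, (k <= i)%N -> a i < b i) ->
    (\esum_(j in box k a b) minterm alpha M j <=
      (C * (\prod_(i < d | (k <= i)%N) (b i - a i)%:~R)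
         * \prod_(i < k.+1) (M i `^ theta i))%:E)%E.
Proof.
move=> _ _ alpha_free theta_gt0 theta_sum1 theta_alpha.
have alpha_unit : alpha_e_mx alpha \in unitmx by rewrite -row_free_unit.
have δ_gt0 := decay_gt0 alpha theta_gt0.
set δ := decay alpha theta in δ_gt0 *.
set B := 3 / (1 - expR (- δ)).
have q_lt1 : expR (- δ) < 1 by rewrite expR_lt1 oppr_lt0.
have B_ge1 : 1 <= B.
  by rewrite /B ler_pdivlMr ?subr_gt0 // mul1r; have := expR_gt0 (- δ); lra.
exists ((2 * B) ^+ d) => M a b M_gt0 a_lt_b.
rewrite prod_powR_theta // mulrC.
apply: le_trans (le_esum (fun j _ => minterm_le alpha_unit theta_gt0 theta_sum1
  theta_alpha M_gt0 j)) _.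
apply: esum_le_of_seq => s s_uniq s_box.
rewrite -mulr_sumr ler_wpM2l ?expR_ge0 //.
apply: le_trans (sum_box_decay_le δ_gt0 _ s_uniq s_box) _.
  by move=> x y /(center_tail alpha theta M) ->.
rewrite -[d in (2 * B) ^+ d]card_ord; apply: prod_if_le => // i /a_lt_b.
by rewrite subr_gt0.
Qed.
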